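(* Let $R$ be an arbitrary unital associative commutative ring, let $k$ be a positive integer, let $m_1,\dots,m_k$ be positive integers and put $N_k=\sum_{i=1}^k m_i-k+1$. Then there exists an associative $R$-algebra $A$ such that \[ T^{(m_1)}(A)\cdots T^{(m_k)}(A)\not\subseteq T^{(1+N_k)}(A). \]
   Context: For an associative algebra $A$, left-normed commutators are defined by $[a_1,a_2]=a_1a_2-a_2a_1$ and $[a_1,\dots,a_{n-1},a_n]=[[a_1,\dots,a_{n-1}],a_n]$ for $n\ge 3$. For $n\ge 2$, $T^{(n)}(A)$ denotes the two-sided ideal of $A$ generated by all commutators $[a_1,\dots,a_n]$ with $a_i\in A$, and $T^{(1)}(A)=A$. *)

From HB Require Import structures.
From mathcomp Require Import all_boot all_order all_algebra.
Set Implicit Arguments. Unset Strict Implicit. Unset Printing Implicit Defensive.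
Import GRing.Theory.
Local Open Scope ring_scope.

(* Left-normed commutator: lcomm a [:: a2; ...; an] = [a, a2, ..., an],
   with [a] = a, [c, b] = c*b - b*c, [a1,...,an] = [[a1,...,a(n-1)], an]. *)
Definition lcomm (A : nzRingType) (a : A) (s : seq A) : A :=
  foldl (fun c b => c * b - b * c) a s.

Definition is_lcomm (A : nzRingType) (n : nat) (x : A) : Prop :=
  exists (a : A) (s : seq A), size s = n.-1 /\ x = lcomm a s.

Definition in_ideal_gen (A : nzRingType) (P : A -> Prop) (x : A) : Prop :=
  exists (n : nat) (u c v : 'I_n -> A),
    (forall i, P (c i)) /\ x = \sum_(i < n) u i * c i * v i.

Definition T_ideal (A : nzRingType) (n : nat) (x : A) : Prop :=
  in_ideal_gen (is_lcomm n) x.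

Definition in_T_product (A : nzRingType) (k : nat) (m : 'I_k -> nat) (y : A) : Prop :=
  exists (n : nat) (x : 'I_n -> 'I_k -> A),
    (forall i j, T_ideal (m j) (x i j)) /\
    y = \sum_(i < n) \prod_(j < k) x i j.

From HB Require Import structures.
From mathcomp Require Import all_boot all_order all_algebra.
From mathcomp Require Import boolp.
Set Implicit Arguments. Unset Strict Implicit. Unset Printing Implicit Defensive.
Import GRing.Theory.
Local Open Scope ring_scope.

(* Take for A the subring of (k+1)x(k+1) matrices over R[t] generated by the
   scalar matrices, the lower shift x and y = diag(0, -t, ..., -kt).  Then
   x y - y x = t x and the scalars are central, so by induction over the
   generators every commutator of A lies in tA; consequently
   T^(m)(A) is contained in t^(m-1) A.  On the other hand [x, y, ..., y]
   (with m_j - 1 copies of y) equals t^(m_j - 1) x, so the product of these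
   commutators lies in T^(m_1)...T^(m_k) and equals t^(N-1) x^k.  Its
   (k, 0) entry is t^(N-1), so it does not lie in t^N A, which contains
   T^(1+N)(A). *)

Section Commutators.
Variable A : nzRingType.

Lemma lcomm_rcons (a b : A) s : lcomm a (rcons s b) = lcomm a s * b - b * lcomm a s.
Proof. by rewrite /lcomm foldl_rcons. Qed.

Lemma is_lcomm_T_ideal n (z : A) : is_lcomm n z -> T_ideal n z.
Proof.
by move=> hz; exists 1%N, (fun=> 1), (fun=> z), (fun=> 1); rewrite big_ord1 mul1r mulr1.
Qed.

Lemma in_T_product_prod k (m : 'I_k -> nat) (c : 'I_k -> A) :
  (forall j, T_ideal (m j) (c j)) -> in_T_product m (\prod_j c j).
Proof. by move=> hc; exists 1%N, (fun=> c); rewrite big_ord1. Qed.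

Lemma lie_subr (a b b' : A) :
  a * (b - b') - (b - b') * a = (a * b - b * a) - (a * b' - b' * a).
Proof.
rewrite mulrBr mulrBl !opprB addrACA [RHS]addrACA.
by rewrite [- (a * b') + _]addrC.
Qed.

Lemma lie_mulr (a b b' : A) :
  a * (b * b') - (b * b') * a = (a * b - b * a) * b' + b * (a * b' - b' * a).
Proof. by rewrite mulrBl mulrBr !mulrA addrA subrK. Qed.

Variable t : A.
Hypothesis t_central : forall a, GRing.comm t a.

Lemma commXr p a : a * t ^+ p = t ^+ p * a.
Proof. exact/commrX/commr_sym. Qed.

Section CommutatorsInTA.
Hypothesis lie_in_tA : forall a b : A, exists c, a * b - b * a = t * c.

Lemma lcomm_in_tX (a : A) s : exists c, lcomm a s = t ^+ size s * c.
Proof.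
elim/last_ind: s => [|s b [c lcomm_s]]; first by exists a; rewrite expr0 mul1r.
have [c' lie_cb] := lie_in_tA c b.
exists c'; rewrite lcomm_rcons lcomm_s size_rcons (mulrA b) commXr.
by rewrite -!mulrA -mulrBr lie_cb mulrA -exprSr.
Qed.

Lemma T_ideal_in_tX n (z : A) : T_ideal n z -> exists c, z = t ^+ n.-1 * c.
Proof.
move=> [r [u [c [v [c_lcomm ->]]]]].
apply: (big_ind (fun z => exists w, z = t ^+ n.-1 * w)).
- by exists 0; rewrite mulr0.
- by move=> _ _ [w1 ->] [w2 ->]; exists (w1 + w2); rewrite mulrDr.
move=> i _; have [a [s [size_s ->]]] := c_lcomm i.
have [w ->] := lcomm_in_tX a s.
by exists (u i * w * v i); rewrite size_s mulrA commXr !mulrA.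
Qed.

End CommutatorsInTA.

Lemma lcomm_nseq (x y : A) l :
  x * y - y * x = t * x -> lcomm x (nseq l y) = t ^+ l * x.
Proof.
move=> lie_xy; elim: l => [|l IH]; first by rewrite expr0 mul1r.
rewrite -addn1 nseqD cats1 lcomm_rcons IH (mulrA y) commXr.
by rewrite -!mulrA -mulrBr lie_xy mulrA -exprSr addn1.
Qed.

Lemma prod_tX (x : A) k (f : 'I_k -> nat) :
  \prod_(j < k) (t ^+ f j * x) = t ^+ (\sum_(j < k) f j)%N * x ^+ k.
Proof.
elim: k f => [|k IH] f; first by rewrite !big_ord0 expr0 mulr1.
rewrite !big_ord_recr /= IH exprD exprSr -!mulrA; congr (_ * _).
by rewrite !mulrA commXr.
Qed.

End Commutators.

Section GeneratedSubring.
Variables (A : nzRingType) (G : A -> Prop).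

Inductive subring_gen : A -> Prop :=
  | subring_gen_base a of G a : subring_gen a
  | subring_gen1 : subring_gen 1
  | subring_genB a b of subring_gen a & subring_gen b : subring_gen (a - b)
  | subring_genM a b of subring_gen a & subring_gen b : subring_gen (a * b).

Lemma subring_gen0 : subring_gen 0.
Proof. by rewrite -(subrr 1); apply: subring_genB; apply: subring_gen1. Qed.

Lemma subring_genN a : subring_gen a -> subring_gen (- a).
Proof. by rewrite -sub0r; apply: subring_genB subring_gen0. Qed.

Lemma subring_genD a b : subring_gen a -> subring_gen b -> subring_gen (a + b).
Proof. by move=> ga gb; rewrite -[b]opprK; apply/subring_genB/subring_genN. Qed.

Variable t : A.
Hypothesis t_central : forall a, GRing.comm t a.

Definition in_t_gen z := exists2 c, subring_gen c & z = t * c.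

Lemma in_t_genN u : in_t_gen u -> in_t_gen (- u).
Proof. by move=> [c gc ->]; exists (- c); [exact: subring_genN | rewrite mulrN]. Qed.

Lemma in_t_genD u v : in_t_gen u -> in_t_gen v -> in_t_gen (u + v).
Proof. by move=> [c gc ->] [c' gc' ->]; exists (c + c'); [exact: subring_genD | rewrite mulrDr]. Qed.

Lemma in_t_genMl a u : subring_gen a -> in_t_gen u -> in_t_gen (a * u).
Proof.
by move=> ga [c gc ->]; exists (a * c); [exact: subring_genM | rewrite mulrA -t_central mulrA].
Qed.

Lemma in_t_genMr u b : in_t_gen u -> subring_gen b -> in_t_gen (u * b).
Proof. by move=> [c gc ->] gb; exists (c * b); [exact: subring_genM | rewrite mulrA]. Qed.

Lemma lie_in_t_gen_closed a :
  (forall g, G g -> in_t_gen (a * g - g * a)) ->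
  forall b, subring_gen b -> in_t_gen (a * b - b * a).
Proof.
move=> lie_a_gen b; elim=> {b} [g /lie_a_gen // | | b b' _ ? _ ? | b b' gb ? gb' ?].
- by exists 0; [exact: subring_gen0 | rewrite mulr1 mul1r subrr mulr0].
- by rewrite lie_subr; apply/in_t_genD/in_t_genN.
- by rewrite lie_mulr; apply: in_t_genD; [apply: in_t_genMr | apply: in_t_genMl].
Qed.

Hypothesis lie_gen : forall g h, G g -> G h -> in_t_gen (g * h - h * g).

Lemma lie_in_t_gen a b : subring_gen a -> subring_gen b -> in_t_gen (a * b - b * a).
Proof.
move=> ga; apply: lie_in_t_gen_closed => g Gg.
rewrite -opprB; apply/in_t_genN/lie_in_t_gen_closed => // h Gh.
exact: lie_gen.
Qed.

End GeneratedSubring.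

Section ShiftAlgebra.
Variables (R : comNzRingType) (n : nat).
Local Notation M := 'M[{poly R}]_n.+1.

Definition lshift_mx : M := \matrix_(i, j) (i == j.+1 :> nat)%:R.
Definition tdiag_mx : M := diag_mx (\row_(j < n.+1) - ((j : nat)%:R * 'X)).
Definition t_mx : M := 'X%:M.

Lemma lshift_mxX a i j : (lshift_mx ^+ a) i j = ((i : nat) == j + a)%N%:R.
Proof.
elim: a i => [|a IH] i; first by rewrite expr0 addn0 !mxE.
rewrite exprS -mulmxE mxE addnS; case: i => [[|i] lt_i_n] /=.
  by rewrite big1 // => l _; rewrite mxE mul0r.
rewrite (bigD1 (Ordinal (ltnW lt_i_n))) //= big1 ?addr0.
  by rewrite mxE IH eqxx mul1r eqSS.
move=> l /eqP l_neq_i; rewrite mxE /= eqSS.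
by case: eqP => [l_eq_i|]; [case: l_neq_i; apply: val_inj | rewrite mul0r].
Qed.

Lemma lshift_tdiag_lie :
  lshift_mx * tdiag_mx - tdiag_mx * lshift_mx = t_mx * lshift_mx.
Proof.
apply/matrixP => i j.
rewrite -!mulmxE mul_mx_diag mul_diag_mx mul_scalar_mx !mxE.
case: eqP => [->|_]; last by rewrite !(mul0r, mulr0, subr0).
by rewrite mulr1 mul1r -natr1 opprK mulrDl mul1r addKr mulr1.
Qed.

Lemma t_mx_central B : GRing.comm t_mx B.
Proof. by rewrite /GRing.comm -!mulmxE scalar_mxC. Qed.

Lemma tX_lshift_neq p (B : M) : t_mx ^+ p * lshift_mx ^+ n != t_mx ^+ p.+1 * B.
Proof.
apply/eqP => /matrixP /(_ ord_max ord0) /(congr1 (fun q : {poly R} => q`_p)).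
rewrite /t_mx -!rmorphXn -!mulmxE !mul_scalar_mx !mxE lshift_mxX add0n eqxx mulr1.
by rewrite coefXn coefXnM ltnSn eqxx => /eqP; rewrite oner_eq0.
Qed.

Definition shift_gen (B : M) : Prop :=
  [\/ B = lshift_mx, B = tdiag_mx | exists c, B = c%:M].

Lemma shift_gen_lie g h :
  shift_gen g -> shift_gen h -> in_t_gen shift_gen t_mx (g * h - h * g).
Proof.
have xy_lie : in_t_gen shift_gen t_mx (lshift_mx * tdiag_mx - tdiag_mx * lshift_mx).
  by exists lshift_mx; [apply: subring_gen_base; apply: Or31 | exact: lshift_tdiag_lie].
have scalar_lie c (B : M) : B * c%:M - c%:M * B = 0.
  by rewrite -!mulmxE scalar_mxC subrr.
have lie0 : in_t_gen shift_gen t_mx 0 by exists 0; [exact: subring_gen0 | rewrite mulr0].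
case=> [->|->|[c ->]]; case=> [->|->|[c' ->]];
  rewrite ?subrr ?scalar_lie //; rewrite -opprB ?scalar_lie ?oppr0 //.
exact: in_t_genN.
Qed.

Definition shift_pred : pred M := fun B => `[< subring_gen shift_gen B >].

Lemma shift_pred_gen B : shift_gen B -> shift_pred B.
Proof. by move=> gB; apply/asboolP/subring_gen_base. Qed.

Lemma shift_pred_subring : subring_closed shift_pred.
Proof.
split; first exact/asboolP/subring_gen1.
- by move=> a b /asboolP ga /asboolP gb; apply/asboolP/subring_genB.
- by move=> a b /asboolP ga /asboolP gb; apply/asboolP/subring_genM.
Qed.

HB.instance Definition _ := GRing.isSubringClosed.Build M shift_pred shift_pred_subring.

Record shift_alg := ShiftAlg { shift_val :> M; _ : shift_pred shift_val }.
HB.instance Definition _ := [isSub for shift_val].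
HB.instance Definition _ := [Choice of shift_alg by <:].
HB.instance Definition _ := [SubChoice_isSubNzRing of shift_alg by <:].

Lemma shift_pred_scale c (a : shift_alg) : shift_pred (c%:P *: val a).
Proof.
rewrite -mul_scalar_mx mulmxE; apply/asboolP/subring_genM.
  by apply/subring_gen_base/Or33; exists c%:P.
exact/asboolP/(valP a).
Qed.

Definition shift_scale c a := ShiftAlg (shift_pred_scale c a).

Lemma shift_scaleA c c' a : shift_scale c (shift_scale c' a) = shift_scale (c * c') a.
Proof. by apply: val_inj; rewrite /= scalerA polyCM. Qed.

Lemma shift_scale1 : left_id 1 shift_scale.
Proof. by move=> a; apply: val_inj; rewrite /= scale1r. Qed.

Lemma shift_scaleDr : right_distributive shift_scale +%R.
Proof. by move=> c a b; apply: val_inj; rewrite /= scalerDr. Qed.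

Lemma shift_scaleDl a : {morph shift_scale^~ a : c c' / c + c'}.
Proof. by move=> c c'; apply: val_inj; rewrite /= polyCD scalerDl. Qed.

HB.instance Definition _ := GRing.Zmodule_isLmodule.Build R shift_alg
  shift_scaleA shift_scale1 shift_scaleDr shift_scaleDl.

Lemma shift_scaleAl c (a b : shift_alg) : c *: (a * b) = (c *: a) * b.
Proof. by apply: val_inj; rewrite /= scalerAl. Qed.
HB.instance Definition _ := GRing.Lmodule_isLalgebra.Build R shift_alg shift_scaleAl.

Lemma shift_scaleAr c (a b : shift_alg) : c *: (a * b) = a * (c *: b).
Proof. by apply: val_inj; rewrite /= scalerAr. Qed.
HB.instance Definition _ := GRing.Lalgebra_isAlgebra.Build R shift_alg shift_scaleAr.

Definition shift_x := ShiftAlg (shift_pred_gen (Or31 _ _ (erefl lshift_mx))).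
Definition shift_y := ShiftAlg (shift_pred_gen (Or32 _ _ (erefl tdiag_mx))).
Definition shift_t := ShiftAlg (shift_pred_gen (Or33 _ _ (ex_intro _ 'X (erefl t_mx)))).

Lemma shift_t_central (a : shift_alg) : GRing.comm shift_t a.
Proof. exact/val_inj/t_mx_central. Qed.

Lemma shift_lie (a b : shift_alg) : exists c, a * b - b * a = shift_t * c.
Proof.
have gen_val (c : shift_alg) : subring_gen shift_gen (val c) by apply/asboolP/(valP c).
have [c /asboolP gc lie_ab] := lie_in_t_gen t_mx_central shift_gen_lie (gen_val a) (gen_val b).
by exists (ShiftAlg gc); apply: val_inj.
Qed.

Lemma shift_xy_lie : shift_x * shift_y - shift_y * shift_x = shift_t * shift_x.
Proof. exact/val_inj/lshift_tdiag_lie. Qed.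

Lemma shift_tX_x_neq p (w : shift_alg) :
  shift_t ^+ p * shift_x ^+ n != shift_t ^+ p.+1 * w.
Proof. by rewrite -(inj_eq val_inj) !rmorphM !rmorphXn tX_lshift_neq. Qed.

End ShiftAlgebra.

Lemma sum_predn k (m : 'I_k -> nat) :
  (forall i, 0 < m i)%N -> (\sum_(i < k) (m i).-1 = \sum_(i < k) m i - k)%N.
Proof.
move=> m_gt0; under eq_bigr do rewrite -subn1.
by rewrite sumnB // sum1_card card_ord.
Qed.

Theorem corollary1p6 (R : comNzRingType) (k : nat) (m : 'I_k -> nat) :
  (0 < k)%N -> (forall i, 0 < m i)%N ->
  let N := ((\sum_(i < k) m i) - k + 1)%N in
  exists A : algType R,
    ~ (forall x : A, in_T_product m x -> T_ideal (1 + N) x).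
Proof.
move=> _ m_gt0 N; exists (shift_alg R k) => T_product_sub.
have t_central := @shift_t_central R k.
set x := shift_x R k; set y := shift_y R k; set t := shift_t R k.
pose c j := lcomm x (nseq (m j).-1 y).
have c_T j : T_ideal (m j) (c j).
  by apply: is_lcomm_T_ideal; exists x, (nseq (m j).-1 y); rewrite size_nseq.
have c_tX j : c j = t ^+ (m j).-1 * x := lcomm_nseq t_central _ (@shift_xy_lie R k).
have [w] := T_ideal_in_tX t_central (@shift_lie R k) (T_product_sub _ (in_T_product_prod c_T)).
rewrite (eq_bigr _ (fun j _ => c_tX j)) prod_tX // sum_predn // add1n /N addn1.
exact/eqP/shift_tX_x_neq.
Qed.
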